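(* For $n\ge 4$, the dom-stability of the cycle $C_n$ is $St_{dom}(C_n)=3$ if $n\equiv 0\pmod 4$, $St_{dom}(C_n)=2$ if $n\equiv 3\pmod 4$, and $St_{dom}(C_n)=1$ otherwise.
   Context: A dominated coloring of a graph is a proper coloring in which every color class is dominated by at least one vertex, i.e. for each color class $C$ there is a vertex adjacent to every vertex of $C$; $\chi_{dom}(G)$ is the minimum number of colors in a dominated coloring. The dom-stability $St_{dom}(G)$ is the minimum number of vertices of $G$ whose removal changes the dominated chromatic number of $G$. *)

From mathcomp Require Import all_boot.
Set Implicit Arguments. Unset Strict Implicit. Unset Printing Implicit Defensive.

(* A simple graph is a symmetric irreflexive relation [e] on a finType [T].
   We work with induced subgraphs G[A] for A : {set T}. *)

(* [f] is a dominated coloring of the induced subgraph G[A] using colors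
   [0, k): proper, and every (nonempty) color class C is dominated by a
   vertex x of G[A], i.e. every vertex of C is adjacent to x.
   Convention: a vertex also dominates itself, so an isolated
   vertex forming its own class is dominated (by itself).  Since color classes
   are independent, this only matters for isolated vertices. *)
Definition dominated_coloring (T : finType) (e : rel T) (A : {set T})
    (k : nat) (f : T -> nat) : Prop :=
  [/\ (forall x, x \in A -> f x < k),
      (forall x y, x \in A -> y \in A -> e x y -> f x <> f y) &
      (forall c, (exists2 y, y \in A & f y = c) ->
         exists2 x, x \in A &
           forall y, y \in A -> f y = c -> y = x \/ e x y)].

Definition is_chi_dom (T : finType) (e : rel T) (A : {set T}) (k : nat) : Prop :=
  (exists f, dominated_coloring e A k f) /\
  (forall k' f, dominated_coloring e A k' f -> k <= k').

Definition same_chi_dom (T : finType) (e : rel T) (S : {set T}) : Prop :=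
  forall k, is_chi_dom e (~: S) k <-> is_chi_dom e [set: T] k.

Definition is_St_dom (T : finType) (e : rel T) (s : nat) : Prop :=
  (exists S : {set T}, #|S| = s /\ ~ same_chi_dom e S) /\
  (forall S : {set T}, ~ same_chi_dom e S -> s <= #|S|).

Definition cycle_rel (n : nat) : rel 'I_n :=
  fun i j => (val j == (val i).+1 %% n) || (val i == (val j).+1 %% n).
Arguments cycle_rel n : clear implicits.

From mathcomp Require Import all_boot zmodp zify.

Set Implicit Arguments.
Unset Strict Implicit.
Unset Printing Implicit Defensive.

(* In a dominated colouring of an induced subgraph A of the cycle C_n, every colour
   class is a single vertex or a pair {z, z + 2} dominated by z + 1, and for n >= 5 two
   pairs never overlap as z, z + 2, z + 4 (their dominator would have three neighbours).
   So |A| <= k + p, where the left ends of the p pairs have no two elements at distance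
   2; on a path of L vertices such a set has at most chi_path L elements, and in the whole
   cycle at most chi_path (n - 2).  Colouring a path by blocks of four vertices, two pairs
   per block, uses chi_path L colours; together this gives chi_dom(C_n) = chi_path n.
   Removing fewer than St vertices leaves, up to rotation, one or two paths whose bounds
   still add up to chi_path n, whereas removing an arc of St consecutive vertices leaves
   P_(n - St), and chi_path (n - St) < chi_path n. *)

Lemma card_le_of_inj_bounded (T : finType) (B : {set T}) (f : T -> nat) k :
  {in B &, injective f} -> (forall x, x \in B -> f x < k) -> #|B| <= k.
Proof.
move=> inj_f f_lt; rewrite cardE -(size_iota 0 k) -(size_map f).
apply: uniq_leq_size.
  by rewrite map_inj_in_uniq ?enum_uniq // => x y; rewrite !mem_enum; exact: inj_f.
by move=> c /mapP [x]; rewrite mem_enum mem_iota => /f_lt ? ->.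
Qed.

Lemma set2_of_card_le2 (T : finType) (S : {set T}) x :
  x \in S -> #|S| <= 2 -> exists y, S = [set y; x].
Proof.
move=> Sx; rewrite -(setD1K Sx) cardsU1 setD11 /= ltnS => card_le1.
case: (set_0Vmem (S :\ x)) => [->|[y Sy]]; first by exists x; rewrite setU0 setUid.
have nonempty : 0 < #|S :\ x| by apply/card_gt0P; exists y.
have /cards1P [z ->] : #|S :\ x| == 1 by lia.
by exists z; rewrite setUC.
Qed.

Lemma preimset_can (T : finType) (s t : T -> T) (A : {set T}) :
  cancel t s -> t @^-1: (s @^-1: A) = A.
Proof. by move=> tK; apply/setP => x; rewrite !inE tK. Qed.

Section DominatedColorings.

Variables (T : finType) (e : rel T).

Lemma dominated_coloring_preim (s t : T -> T) (A : {set T}) k f :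
  cancel s t -> cancel t s -> {mono s : x y / e x y} ->
  dominated_coloring e A k f -> dominated_coloring e (s @^-1: A) k (f \o s).
Proof.
move=> sK tK es [f_lt f_proper f_dom]; split.
- by move=> x; rewrite inE; apply: f_lt.
- by move=> x y; rewrite !inE => Ax Ay exy; apply: f_proper => //; rewrite es.
- move=> c [y]; rewrite inE => Ay fy.
  have [x Ax x_dom] := f_dom c (ex_intro2 _ _ (s y) Ay fy).
  exists (t x); first by rewrite inE tK.
  move=> z; rewrite inE => Az fz; case: (x_dom _ Az fz) => [sz|exz].
  + by left; rewrite -sz sK.
  + by right; rewrite -es tK.
Qed.

Lemma is_chi_dom_preim (s t : T -> T) (A : {set T}) k :
  cancel s t -> cancel t s -> {mono s : x y / e x y} ->
  is_chi_dom e A k -> is_chi_dom e (s @^-1: A) k.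
Proof.
move=> sK tK es [[f f_col] f_min]; split; first by exists (f \o s); exact: dominated_coloring_preim.
move=> k' g /(dominated_coloring_preim tK sK (can_mono tK es)).
by rewrite preimset_can //; exact: f_min.
Qed.

Lemma same_chi_dom_preim (s t : T -> T) (S : {set T}) :
  cancel s t -> cancel t s -> {mono s : x y / e x y} ->
  same_chi_dom e S <-> same_chi_dom e (s @^-1: S).
Proof.
move=> sK tK es.
have chi_preim B k : is_chi_dom e B k <-> is_chi_dom e (s @^-1: B) k.
  split; first exact: is_chi_dom_preim.
  by move/(is_chi_dom_preim tK sK (can_mono tK es)); rewrite preimset_can.
rewrite /same_chi_dom -preimsetC; split=> same k;
  by move: (same k) (chi_preim (~: S) k) (chi_preim [set: T] k); rewrite preimsetT; tauto.
Qed.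

Lemma is_chi_domE (A : {set T}) K k : is_chi_dom e A K -> is_chi_dom e A k <-> k = K.
Proof.
move=> [[f f_col] f_min]; split=> [[[g g_col] g_min]|->]; last by split; first exists f.
by apply/eqP; rewrite eqn_leq (g_min _ _ f_col) (f_min _ _ g_col).
Qed.

Lemma same_chi_dom_of_chi (S : {set T}) K :
  is_chi_dom e [set: T] K -> is_chi_dom e (~: S) K -> same_chi_dom e S.
Proof.
move=> chiT chiS k.
by split=> [/(is_chi_domE _ chiS) ->|/(is_chi_domE _ chiT) ->].
Qed.

Lemma dominator_adj (A : {set T}) k f a b x :
  dominated_coloring e A k f -> a \in A -> b \in A -> a != b -> f a = f b ->
  (forall y, y \in A -> f y = f a -> y = x \/ e x y) -> e x a.
Proof.
move=> [_ f_proper _] Aa Ab neq_ab fab x_dom.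
case: (x_dom _ Aa erefl) => // xa; case: (x_dom _ Ab (esym fab)) => xb.
  by move: neq_ab; rewrite xa xb eqxx.
by have := f_proper _ _ Aa Ab; rewrite {1}xa => /(_ xb).
Qed.

Lemma dominated_coloring_ge2 (A : {set T}) k f :
  1 < #|A| -> dominated_coloring e A k f -> 2 <= k.
Proof.
move=> /card_gt1P [a [b [Aa Ab neq_ab]]] f_col; have [f_lt f_proper f_dom] := f_col.
have := f_lt _ Aa; have := f_lt _ Ab.
case: (eqVneq (f a) (f b)) => [fab|/eqP]; last by lia.
have [x Ax x_dom] := f_dom (f a) (ex_intro2 _ _ a Aa erefl).
have := f_proper _ _ Ax Aa (dominator_adj f_col Aa Ab neq_ab fab x_dom).
have := f_lt _ Ax; lia.
Qed.

Lemma dominated_coloring_union (A1 A2 : {set T}) k1 k2 f :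
  dominated_coloring e A1 k1 f -> dominated_coloring e A2 k2 f ->
  (forall x, x \in A2 -> k1 <= f x) -> k1 <= k2 ->
  (forall x y, x \in A1 -> y \in A2 -> ~~ e x y && ~~ e y x) ->
  dominated_coloring e (A1 :|: A2) k2 f.
Proof.
move=> [lt1 proper1 dom1] [lt2 proper2 dom2] ge2 k12 apart; split.
- by move=> x /setUP [/lt1|/lt2]; lia.
- move=> x y /setUP [A1x|A2x] /setUP [A1y|A2y]; try by [apply: proper1|apply: proper2].
  + by have /andP [/negP] := apart _ _ A1x A2y.
  + by have /andP [_ /negP] := apart _ _ A1y A2x.
- move=> c [y /setUP [A1y|A2y] fy].
  + have [x A1x x_dom] := dom1 c (ex_intro2 _ _ y A1y fy).
    exists x => [|z /setUP [A1z|A2z] fz]; [by rewrite inE A1x | exact: x_dom|].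
    by have := lt1 _ A1y; have := ge2 _ A2z; lia.
  + have [x A2x x_dom] := dom2 c (ex_intro2 _ _ y A2y fy).
    exists x => [|z /setUP [A1z|A2z] fz]; [by rewrite inE A2x orbT | | exact: x_dom].
    by have := lt1 _ A1z; have := ge2 _ A2y; lia.
Qed.

End DominatedColorings.

(* chi_dom of the path on L vertices, and also the largest size of a subset of [0, L)
   with no two elements at distance 2. *)
Definition chi_path L := 2 * (L %/ 4) + minn (L %% 4) 2.

Definition path_color i := 2 * (i %/ 4) + i %% 2.

Definition st_dom_cycle n := if n %% 4 == 0 then 3 else if n %% 4 == 3 then 2 else 1.

Lemma count_gap2_free (pr : pred nat) s L :
  (forall i, pr i -> ~~ pr i.+2) ->
  count pr (iota s L) <= chi_path L.
Proof.
move=> gap; elim/ltn_ind: L s => -[|[|[|[|L]]]] IH s /=; try by case: (pr s); case: (pr s.+1).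
- have /implyP := gap s.
  by case: (pr s); case: (pr s.+1); case: (pr s.+2).
have IHL : count pr (iota s.+4 L) <= chi_path L by apply: IH; lia.
have /implyP := gap s; have /implyP := gap s.+1.
have -> : chi_path L.+4 = chi_path L + 2 by rewrite /chi_path; lia.
by move: IHL; case: (pr s); case: (pr s.+1); case: (pr s.+2); case: (pr s.+3) => /=; lia.
Qed.

Lemma modn_add_wrap a r n : a < n -> r <= n ->
  (a + r) %% n = if a + r < n then a + r else a + r - n.
Proof.
move=> a_lt r_le; case: (ltnP (a + r) n) => [lt_n|ge_n]; first by rewrite modn_small.
by rewrite -{1}(subnK ge_n) modnDr modn_small //; lia.
Qed.

Section Cycle.

Variable m : nat.
Local Notation N := m.+1.
Local Notation adj := (cycle_rel m.+1).

Definition rot r (z : 'I_N) : 'I_N := inZp (z + r).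

Lemma rot_wrap r z : r <= N -> rot r z = (if z + r < N then z + r else z + r - N) :> nat.
Proof. exact: modn_add_wrap (ltn_ord z). Qed.

Lemma rotD a b z : rot a (rot b z) = rot (b + a) z.
Proof. by apply: val_inj; rewrite /= modnDml addnA. Qed.

Lemma rotC a b z : rot a (rot b z) = rot b (rot a z).
Proof. by rewrite !rotD addnC. Qed.

Lemma rot_mod r z : rot (r %% N) z = rot r z.
Proof. by apply: val_inj; rewrite /= modnDmr. Qed.

Lemma rotK r : cancel (rot r) (rot (N - r %% N)).
Proof.
move=> z; rewrite -(rot_mod r) rotD subnKC; last exact/ltnW/ltn_mod.
by apply: val_inj; rewrite /= modnDr modn_small.
Qed.

Lemma rotKV r : cancel (rot (N - r %% N)) (rot r).
Proof. by move=> z; rewrite rotC rotK. Qed.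

Lemma rot_inj r : injective (rot r).
Proof. exact: can_inj (rotK r). Qed.

Lemma cycle_relE x y : adj x y = (y == rot 1 x) || (x == rot 1 y).
Proof. by rewrite /cycle_rel -!val_eqE /= !addn1. Qed.

Lemma cycle_rel_rot r : {mono rot r : x y / adj x y}.
Proof. by move=> x y; rewrite !cycle_relE !(rotC 1) !(inj_eq (@rot_inj r)). Qed.

Lemma cycle_rel_val x y : adj x y <->
  y = x + 1 :> nat \/ x = y + 1 :> nat \/
  (x = m :> nat /\ y = 0 :> nat) \/ (y = m :> nat /\ x = 0 :> nat).
Proof.
rewrite cycle_relE -!val_eqE /= !modn_add_wrap //.
have := ltn_ord x; have := ltn_ord y.
by case: (ltnP (x + 1) N); case: (ltnP (y + 1) N) => /= *; split; lia.
Qed.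

Lemma segment_coloring (A : {set 'I_N}) s len c0 f : 3 <= m -> s + len <= N ->
  (forall x, (x \in A) = (s <= x < s + len)) ->
  (forall x, x \in A -> f x = c0 + path_color (x - s)) ->
  dominated_coloring adj A (c0 + chi_path len) f.
Proof.
move=> m_ge3 seg_le memA fE; split.
- by move=> x Ax; rewrite fE //; move: Ax; rewrite memA /path_color /chi_path; lia.
- move=> x y Ax Ay /cycle_rel_val xy; rewrite !fE //.
  by have := ltn_ord x; have := ltn_ord y; move: Ax Ay; rewrite !memA /path_color; lia.
- move=> c [y Ay <-]; have := ltn_ord y; move: (Ay); rewrite memA => y_seg y_lt.
  set i := y - s; set lo := 4 * (i %/ 4) + i %% 2.
  (* The class of y is {s + lo, s + lo + 2}, dominated by s + lo + 1, or just {s + lo}. *)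
  case: (ltnP (lo + 2) len) => [pair|single].
  + have lt_N : s + lo + 1 < N by rewrite /lo /i; lia.
    exists (Ordinal lt_N) => [|z Az fz]; first by rewrite memA /= /lo /i; lia.
    right; apply/cycle_rel_val => /=; have := ltn_ord z.
    by move: (Az) fz; rewrite memA !fE // /path_color /lo /i; lia.
  + have lt_N : s + lo < N by rewrite /lo /i; lia.
    exists (Ordinal lt_N) => [|z Az fz]; first by rewrite memA /= /lo /i; lia.
    left; apply: val_inj => /=; have := ltn_ord z.
    by move: (Az) fz; rewrite memA !fE // /path_color /lo /i; lia.
Qed.

Lemma path_coloring len : 3 <= m -> len <= N ->
  dominated_coloring adj [set x : 'I_N | x < len] (chi_path len) (fun x => path_color x).
Proof.
move=> m_ge3 len_le; apply: (@segment_coloring _ 0 len 0) => // x.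
- by rewrite inE.
- by rewrite subn0.
Qed.

Lemma card_ord_count (P : {set 'I_N}) : #|P| = count (fun i => inZp i \in P) (iota 0 N).
Proof.
rewrite -val_enum_ord count_map cardE /enum_mem size_filter filter_predT.
by apply: eq_count => x /=; rewrite valZpK.
Qed.

Lemma card_gap2_free (P : {set 'I_N}) a b c : a <= b <= c -> c <= N ->
  (forall z, z \in P -> rot 2 z \notin P) ->
  (forall z : 'I_N, z \in P -> (z < a) || (b <= z < c)) ->
  #|P| <= chi_path a + chi_path (c - b).
Proof.
move=> /andP [ab bc] cN gap supp; rewrite card_ord_count.
set pr := fun i => inZp i \in P.
have gap_pr i : pr i -> ~~ pr i.+2.
  rewrite /pr; have -> : inZp i.+2 = rot 2 (inZp i) by apply: val_inj; rewrite /= modnDml addn2.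
  exact: gap.
have cut k l : k <= l -> l <= N -> iota k (N - k) = iota k (l - k) ++ iota l (N - l).
  by move=> kl lN; rewrite -{2 3}(subnKC kl) -iotaD; congr iota; lia.
have none k l : l <= N -> (forall i, k <= i < l -> i < N -> ~~ pr i) ->
    count pr (iota k (l - k)) = 0.
  move=> lN out; rewrite (@eq_in_count _ _ pred0) ?count_pred0 // => i.
  by rewrite mem_iota => range; apply/negbTE/out; lia.
rewrite -(subn0 N) (cut 0 a) ?(cut a b) ?(cut b c) //; try lia.
rewrite !count_cat (none a b) ?(none c N) ?add0n ?addn0 ?subn0 //; try lia.
- exact: leq_add (count_gap2_free _ _ gap_pr) (count_gap2_free _ _ gap_pr).
- by move=> i range iN; apply/negP => /supp; rewrite /= modn_small //; lia.
- by move=> i range iN; apply/negP => /supp; rewrite /= modn_small //; lia.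
Qed.

Lemma card_cycle_gap2_free (P : {set 'I_N}) :
  (forall z, z \in P -> rot 2 z \notin P) -> #|P| <= chi_path (N - 2).
Proof.
move=> gap.
(* Two consecutive vertices outside P, rotated to the end, put P inside [0, n - 2). *)
have [z0 [Pz0 Pz1]] : exists z0, z0 \notin P /\ rot 1 z0 \notin P.
  case: (set_0Vmem P) => [->|[w Pw]]; first by exists ord0; rewrite !inE.
  case P3: (rot 3 w \in P); [exists (rot 1 w) | exists (rot 2 w)]; rewrite rotD.
  - by split; [apply: contraTN P3 => /gap; rewrite rotD | exact: gap].
  - by split; [exact: gap | rewrite P3].
rewrite -(card_preimset P (@rot_inj (z0 + 2))).
have := @card_gap2_free (rot (z0 + 2) @^-1: P) (N - 2) (N - 2) (N - 2).
rewrite subnn addn0 leqnn leq_subr; apply=> //.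
  by move=> z; rewrite !inE => /gap; rewrite rotC.
move=> z; rewrite inE => Pz; apply/orP; left; rewrite ltnNge; apply: contraL Pz => z_ge.
have -> : rot (z0 + 2) z = rot (z + 2 - N) z0.
  apply: val_inj; rewrite /= (_ : z + (z0 + 2) = z0 + (z + 2 - N) + N) ?modnDr //; lia.
have [->|->] : z + 2 - N = 0 \/ z + 2 - N = 1 by have := ltn_ord z; lia.
- by rewrite (_ : rot 0 z0 = z0) //; apply: val_inj; rewrite /= addn0 modn_small.
- exact: Pz1.
Qed.

Lemma rot_neq r z : 0 < r < N -> rot r z != z.
Proof.
move=> r_range; rewrite -val_eqE /= (modn_add_wrap (ltn_ord z)); last by lia.
by case: (ltnP (z + r) N); lia.
Qed.

Lemma cycle_three_nbrs x a b c : adj x a -> adj x b -> adj x c -> [\/ a = b, a = c | b = c].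
Proof.
rewrite !cycle_relE => /orP [] /eqP xa /orP [] /eqP xb /orP [] /eqP xc;
  first [ by apply: Or31; apply: (@rot_inj 1); congruence
        | by apply: Or32; apply: (@rot_inj 1); congruence
        | by apply: Or33; apply: (@rot_inj 1); congruence ].
Qed.

(* Left ends of the two-vertex colour classes {z, z + 2}, dominated by z + 1. *)
Definition paired (A : {set 'I_N}) (f : 'I_N -> nat) :=
  [set z | [&& z \in A, rot 1 z \in A, rot 2 z \in A & f z == f (rot 2 z)]].

Lemma same_color_paired (A : {set 'I_N}) k f y1 y2 :
  dominated_coloring adj A k f -> y1 \in A -> y2 \in A -> y1 != y2 -> f y1 = f y2 ->
  y1 \in paired A f /\ y2 = rot 2 y1 \/ y2 \in paired A f /\ y1 = rot 2 y2.
Proof.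
move=> f_col A1 A2 ne12 f12; have [_ _ f_dom] := f_col.
have [x Ax x_dom] := f_dom (f y1) (ex_intro2 _ _ y1 A1 erefl).
have x_dom2 y : y \in A -> f y = f y2 -> y = x \/ adj x y by rewrite -f12; exact: x_dom.
have := dominator_adj f_col A1 A2 ne12 f12 x_dom.
have ne21 : y2 != y1 by rewrite eq_sym.
have := dominator_adj f_col A2 A1 ne21 (esym f12) x_dom2.
rewrite !cycle_relE => /orP [] /eqP xy2 /orP [] /eqP xy1.
- by move: ne12; rewrite xy1 xy2 eqxx.
- have y12 : rot 2 y1 = y2 by rewrite xy2 xy1 rotD.
  by left; rewrite inE A1 -xy1 Ax y12 A2 f12 /=.
- have y21 : rot 2 y2 = y1 by rewrite xy1 xy2 rotD.
  by right; rewrite inE A2 -xy2 Ax y21 A1 f12 /=.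
- by move: ne12; rewrite (@rot_inj 1 y1 y2) ?eqxx // -xy1 -xy2.
Qed.

Lemma card_le_colors_paired (A : {set 'I_N}) k f :
  dominated_coloring adj A k f -> #|A| <= k + #|paired A f|.
Proof.
move=> f_col; have [f_lt _ _] := f_col.
set B := A :\: rot 2 @: paired A f.
have inj_f : {in B &, injective f}.
  move=> y1 y2 /setDP [A1 n1] /setDP [A2 n2] f12; apply/eqP/negP => /negP ne12.
  case: (same_color_paired f_col A1 A2 ne12 f12) => [[P1 y12]|[P2 y21]].
  - by case/negP: n2; rewrite y12 imset_f.
  - by case/negP: n1; rewrite y21 imset_f.
have B_le : #|B| <= k.
  by apply: card_le_of_inj_bounded inj_f _ => x /setDP [Ax _]; exact: f_lt.
have A_sub : A \subset B :|: rot 2 @: paired A f.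
  by apply/subsetP => x Ax; rewrite !inE Ax andbT orNb.
apply: leq_trans (subset_leq_card A_sub) _; apply: leq_trans (leq_card_setU _ _).1 _.
exact: leq_add B_le (leq_imset_card _ _).
Qed.

Lemma paired_gap2 (A : {set 'I_N}) k f : 3 < m -> dominated_coloring adj A k f ->
  forall z, z \in paired A f -> rot 2 z \notin paired A f.
Proof.
move=> m_gt3 f_col z; rewrite !inE => /and4P [Az _ A2z /eqP f02].
apply/negP => /and4P [_ _ A4z /eqP f24].
have n02 : z != rot 2 z by rewrite eq_sym rot_neq //; lia.
have n04 : z != rot 2 (rot 2 z) by rewrite eq_sym rotD rot_neq //; lia.
have n24 : rot 2 z != rot 2 (rot 2 z) by rewrite (inj_eq (@rot_inj 2)).
have n20 : rot 2 z != z by rewrite eq_sym.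
have n40 : rot 2 (rot 2 z) != z by rewrite eq_sym.
have [_ _ f_dom] := f_col.
have [x Ax x_dom] := f_dom (f z) (ex_intro2 _ _ z Az erefl).
have adj_x a b : a \in A -> b \in A -> a != b -> f a = f z -> f b = f z -> adj x a.
  move=> Aa Ab ab fa fb; apply: dominator_adj f_col Aa Ab ab (etrans fa (esym fb)) _.
  by rewrite fa.
(* z, z + 2 and z + 4 would be three distinct neighbours of the dominator x. *)
have := cycle_three_nbrs (adj_x _ _ Az A2z n02 erefl (esym f02))
  (adj_x _ _ A2z Az n20 (esym f02) erefl)
  (adj_x _ _ A4z Az n40 (etrans (esym f24) (esym f02)) erefl).
by case=> /eqP; apply/negP.
Qed.

Lemma chi_cycle : 3 <= m -> is_chi_dom adj [set: 'I_N] (chi_path N).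
Proof.
move=> m_ge3; split.
  exists (fun x : 'I_N => path_color x).
  have -> : [set: 'I_N] = [set x : 'I_N | x < N] by apply/setP => x; rewrite !inE ltn_ord.
  exact: path_coloring.
move=> k f f_col; case: (ltnP 3 m) => [m_gt3|m_le3].
  have := card_le_colors_paired f_col.
  have := card_cycle_gap2_free (paired_gap2 m_gt3 f_col).
  by rewrite cardsT card_ord /chi_path; lia.
have -> : m = 3 by lia.
by apply: dominated_coloring_ge2 f_col; rewrite cardsT card_ord; lia.
Qed.

Lemma in_setC2_max (u x : 'I_N) :
  (x \in ~: [set u; ord_max]) = (x < m) && (x != u :> nat).
Proof. by rewrite !inE negb_or -!val_eqE /= andbC ltn_neqAle -ltnS ltn_ord andbT. Qed.

Lemma card_setC2_max (u : 'I_N) : #|~: [set u; ord_max]| = N - (u != m :> nat).+1.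
Proof. by rewrite [#|~: _|]cardsCs setCK cards2 card_ord -val_eqE. Qed.

Lemma two_paths_coloring (u : 'I_N) : 3 <= m ->
  dominated_coloring adj (~: [set u; ord_max]) (chi_path u + chi_path (m - u.+1))
    (fun x => if x < u then path_color x else chi_path u + path_color (x - u.+1)).
Proof.
move=> m_ge3; have u_lt := ltn_ord u.
have -> : ~: [set u; ord_max] = [set x : 'I_N | x < u] :|: [set x : 'I_N | u < x < m].
  by apply/setP => x; rewrite in_setC2_max !inE; case: ltngtP; case: ltngtP => //=; lia.
apply: dominated_coloring_union.
- apply: (@segment_coloring _ 0 u 0) => //; first lia.
  + by move=> x; rewrite inE.
  + by move=> x; rewrite inE subn0 => ->.
- apply: (@segment_coloring _ u.+1 (m - u.+1) (chi_path u)) => //; first lia.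
  + by move=> x; rewrite inE; lia.
  + by move=> x; rewrite inE => /andP [ux _]; rewrite ltnNge ltnW.
- by move=> x; rewrite inE => /andP [ux _]; rewrite ltnNge (ltnW ux) leq_addr.
- by rewrite leq_addr.
- move=> x y; rewrite !inE => xu uy.
  by apply/andP; split; apply/negP => /cycle_rel_val; lia.
Qed.

Lemma two_paths_colors_ge (u : 'I_N) k f : 3 < m ->
  dominated_coloring adj (~: [set u; ord_max]) k f ->
  #|~: [set u; ord_max]| <= k + (chi_path (u - 2) + chi_path (m - 2 - minn u.+1 (m - 2))).
Proof.
move=> m_gt3 f_col; have u_lt := ltn_ord u.
apply: leq_trans (card_le_colors_paired f_col) _; rewrite leq_add2l.
apply: card_gap2_free (paired_gap2 m_gt3 f_col) _; [lia | lia |].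
move=> z; rewrite inE !in_setC2_max.
case/and4P=> [/andP [z_lt z_u] /andP [z1_lt z1_u] /andP [z2_lt z2_u] _].
move: z1_lt z1_u z2_lt z2_u; rewrite !rot_wrap //; last lia.
by case: (ltnP (z + 1) N); case: (ltnP (z + 2) N); lia.
Qed.

Lemma chi_cycle_minus (u : 'I_N) : 3 <= m -> #|[set u; ord_max]| < st_dom_cycle N ->
  is_chi_dom adj (~: [set u; ord_max]) (chi_path N).
Proof.
move=> m_ge3; rewrite cards2 -val_eqE /= /st_dom_cycle => card_lt.
have u_lt := ltn_ord u.
split.
  have -> : chi_path N = chi_path u + chi_path (m - u.+1).
    by move: card_lt; rewrite /chi_path; case: eqP => [->|_]; repeat case: ifP => /eqP ?; lia.
  by eexists; apply: two_paths_coloring.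
move=> k f f_col; case: (ltnP 3 m) => [m_gt3|m_le3].
  move: (two_paths_colors_ge m_gt3 f_col) card_lt; rewrite card_setC2_max /chi_path.
  by case: eqP => [->|u_neq] /=; repeat case: ifP => /eqP ?; lia.
rewrite (_ : chi_path N = 2); last by rewrite /chi_path; lia.
apply: dominated_coloring_ge2 f_col.
by rewrite card_setC2_max; move: card_lt; case: eqP => /=; lia.
Qed.

Lemma card_ord_lt L : L <= N -> #|[set x : 'I_N | x < L]| = L.
Proof.
move=> L_le; rewrite -sum1_card (eq_bigl (fun i : 'I_N => i < L)) => [|i]; last by rewrite inE.
by rewrite (big_ord_narrow L_le) sum1_card card_ord.
Qed.

Lemma st_dom_cycle_le3 : st_dom_cycle N <= 3.
Proof. by rewrite /st_dom_cycle; case: ifP => //; case: ifP. Qed.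

Lemma arc_changes_chi_dom : 3 <= m ->
  ~ same_chi_dom adj (~: [set x : 'I_N | x < N - st_dom_cycle N]).
Proof.
move=> m_ge3; rewrite /same_chi_dom setCK => same.
have [_ chi_min] := (same _).2 (chi_cycle m_ge3).
have := chi_min _ _ (path_coloring m_ge3 (leq_subr _ _)).
by rewrite /st_dom_cycle /chi_path; repeat case: ifP => /eqP ?; lia.
Qed.

Lemma small_same_chi_dom (S : {set 'I_N}) : 3 <= m ->
  #|S| < st_dom_cycle N -> same_chi_dom adj S.
Proof.
move=> m_ge3 card_lt.
case: (set_0Vmem S) => [->|[v Sv]]; first by move=> k; rewrite setC0.
rewrite (same_chi_dom_preim _ (rotK v.+1) (rotKV v.+1) (@cycle_rel_rot v.+1)).
have max_in : ord_max \in rot v.+1 @^-1: S.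
  rewrite inE (_ : rot v.+1 ord_max = v) //; apply: val_inj.
  by rewrite /= (_ : m + v.+1 = v + N) ?modnDr ?modn_small //; lia.
have card_preim := card_preimset S (@rot_inj v.+1).
have card_le2 : #|rot v.+1 @^-1: S| <= 2 by rewrite card_preim; have := st_dom_cycle_le3; lia.
have [u S_eq] := set2_of_card_le2 max_in card_le2.
apply: same_chi_dom_of_chi (chi_cycle m_ge3) _; rewrite S_eq.
by apply: chi_cycle_minus m_ge3 _; rewrite -S_eq card_preim.
Qed.

End Cycle.

Theorem mainTheorem9 (n : nat) : 4 <= n ->
  is_St_dom (cycle_rel n)
    (if n %% 4 == 0 then 3 else if n %% 4 == 3 then 2 else 1).
Proof.
case: n => [|m] // m_ge3; change (is_St_dom (cycle_rel m.+1) (st_dom_cycle m.+1)).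
split.
  exists (~: [set x : 'I_m.+1 | x < m.+1 - st_dom_cycle m.+1]).
  split; last exact: arc_changes_chi_dom.
  rewrite [#|~: _|]cardsCs setCK card_ord card_ord_lt ?leq_subr //.
  by have := st_dom_cycle_le3 m; lia.
move=> S changed; rewrite leqNgt; apply/negP => card_lt.
exact/changed/small_same_chi_dom.
Qed.
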